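(* Suppose an SCC $F$ is mixed-Nash-A-implemented by $\mathcal M=\langle M,g\rangle$. Let $(i,\theta)\in\mathcal I\times\Theta$ and $\lambda\in MNE^{(\mathcal M,\theta)}$. If $F(\theta)\subseteq\arg\min_{z\in Z^*}u_i^\theta(z)$, $\Xi_i(\theta)\ne\emptyset$, and $Z^*\cap\mathcal L_i^Z(F(\theta),\theta)$ is an $i$-$Z^*$-max set, then $$\bigcup_{m_i\in M_i}\mathrm{SUPP}[g(m_i,\lambda_{-i})]\subseteq Z^*\cap\mathcal L_i^Z(F(\theta),\theta)\cap\Big(\bigcup_{K\in\Xi_i(\theta)}\bigcap_{\theta'\in K}F(\theta')\Big).$$
   Context: Standing setup: $\mathcal I=\{1,\dots,I\}$ finite, $I\ge 3$; $\Theta$ finite or countably infinite; $Z$ finite; $Y=\Delta(Z)$; $u_i^\theta:Z\to\mathbb R$, $U_i^\theta(y)=\sum_zy_zu_i^\theta(z)$; $\mathcal L_i^Z(\alpha,\theta)=\{z\in Z:U_i^\theta(\alpha)\ge u_i^\theta(z)\}$ and $\mathcal L_i^Z(E,\theta)=\bigcap_{z\in E}\mathcal L_i^Z(z,\theta)$. A mechanism $\mathcal M=\langle M=\times_iM_i,g:M\to Y\rangle$ has countable $M_i$; $g(\lambda)$, $g(m_i,\lambda_{-i})$ are induced lotteries; $MNE^{(\mathcal M,\theta)}$ the mixed Nash equilibria at $\theta$. $F$ is mixed-Nash-A-implemented by $\mathcal M$ if $\bigcup_{\lambda\in MNE^{(\mathcal M,\theta)}}\mathrm{SUPP}(g[\lambda])=F(\theta)$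 for all $\theta$. A nonempty $E\subseteq Z$ is an $i$-max set if for some $\theta$, $E\subseteq\arg\max_{z\in E}u_i^\theta(z)$ and $E\subseteq\arg\max_{z\in Z}u_j^\theta(z)$ for all $j\ne i$. $Z^*=\bigcup_\theta F(\theta)$ if $Z$ is an $i$-max set for some $i$, else $Z^*=Z$. A nonempty $E\subseteq Z^*$ is an $i$-$Z^*$-$\theta$-max set if $E\subseteq\arg\max_{z\in E}u_i^\theta(z)$ and $E\subseteq\arg\max_{z\in Z^*}u_j^\theta(z)$ for all $j\ne i$; $\Lambda^i(E)=\{\theta:E\text{ is an }i\text{-}Z^*\text{-}\theta\text{-max set}\}$ ($=\emptyset$ for $E=\emptyset$); $E$ is an $i$-$Z^*$-max set if $\Lambda^i(E)\ne\emptyset$. $\Theta_i^\theta=\{\theta':F(\theta)\text{ is an }i\text{-}Z^*\text{-}\theta'\text{-max set and }F(\theta)\subseteq F(\theta')\}$; $\Xi_i(\theta)=\{K\subseteq\Theta_i^\theta,K\ne\emptyset:\Theta_i^\theta\cap\Lambda^i(Z^*\cap\mathcal L_i^Z(F(\theta),\theta)\cap\bigcap_{\theta'\in K}F(\theta'))=K\}$. *)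

From HB Require Import structures.
From mathcomp Require Import all_boot all_order all_algebra.
From mathcomp Require Import all_classical all_reals.
From mathcomp Require Import esum.
Set Implicit Arguments. Unset Strict Implicit. Unset Printing Implicit Defensive.
Import Order.TTheory GRing.Theory Num.Theory.
Local Open Scope classical_set_scope.
Local Open Scope ring_scope.

Section Game.
Variables (R : realType) (n : nat) (Theta : countType) (Z : finType).
Variable (u : 'I_n -> Theta -> Z -> R).

Definition is_lottery (p : Z -> R) : Prop :=
  (forall z, 0 <= p z) /\ \sum_(z : Z) p z = 1.

Definition Uexp (i : 'I_n) (th : Theta) (p : Z -> R) : R :=
  \sum_(z : Z) p z * u i th z.

Definition is_mixed (T : countType) (q : T -> R) : Prop :=
  (forall t, 0 <= q t) /\ (\esum_(t in [set: T]) (q t)%:E = 1)%E.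

Definition LZ (i : 'I_n) (th : Theta) (p : Z -> R) : set Z :=
  [set z | u i th z <= Uexp i th p].

(* L_i^Z(E, theta) = intersection over z in E of L_i^Z(z,theta),
   where z is viewed as the degenerate lottery (U_i^theta(delta_z) = u_i^theta(z)) *)
Definition LZset (i : 'I_n) (th : Theta) (E : set Z) : set Z :=
  [set z' | forall z, E z -> u i th z' <= u i th z].

Definition argmax_in (f : Z -> R) (S : set Z) : set Z :=
  [set z | S z /\ forall z', S z' -> f z' <= f z].
Definition argmin_in (f : Z -> R) (S : set Z) : set Z :=
  [set z | S z /\ forall z', S z' -> f z <= f z'].

Definition imax_set (i : 'I_n) (E : set Z) : Prop :=
  E !=set0 /\
  exists th : Theta, E `<=` argmax_in (u i th) E /\
    forall j : 'I_n, j != i -> E `<=` argmax_in (u j th) [set: Z].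

Variable F : Theta -> set Z.

Definition Zstar : set Z :=
  if `[< exists i : 'I_n, imax_set i [set: Z] >]
  then [set z | exists th, F th z] else [set: Z].

Definition iZstar_th_max (i : 'I_n) (th : Theta) (E : set Z) : Prop :=
  E !=set0 /\ E `<=` Zstar /\ E `<=` argmax_in (u i th) E /\
  forall j : 'I_n, j != i -> E `<=` argmax_in (u j th) Zstar.

(* Lambda^i(E) (empty for E empty, since max sets are nonempty) *)
Definition Lambda (i : 'I_n) (E : set Z) : set Theta :=
  [set th | iZstar_th_max i th E].

Definition iZstar_max (i : 'I_n) (E : set Z) : Prop := Lambda i E !=set0.

Definition Theta_i (i : 'I_n) (th : Theta) : set Theta :=
  [set th' | iZstar_th_max i th' (F th) /\ F th `<=` F th'].

Definition Xi (i : 'I_n) (th : Theta) : set (set Theta) :=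
  [set K | K `<=` Theta_i i th /\ K !=set0 /\
     Theta_i i th `&` Lambda i (Zstar `&` LZset i th (F th)
                                  `&` \bigcap_(th' in K) F th') = K].

End Game.

Section Mechanism.
Variables (R : realType) (n : nat) (Z : finType) (M : 'I_n -> countType).

Definition profile := {dffun forall i : 'I_n, M i}.

Definition is_mechanism (g : profile -> Z -> R) : Prop :=
  forall m, is_lottery (g m).

Definition is_mixed_profile (lam : forall i : 'I_n, M i -> R) : Prop :=
  forall i, is_mixed (lam i).

Definition glot (g : profile -> Z -> R) (lam : forall i : 'I_n, M i -> R)
  (z : Z) : R :=
  fine (\esum_(m in [set: profile]) ((\prod_(i : 'I_n) lam i (m i)) * g m z)%:E)%E.

Definition glot_dev (g : profile -> Z -> R) (lam : forall i : 'I_n, M i -> R)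
  (i : 'I_n) (mi : M i) (z : Z) : R :=
  fine (\esum_(m in [set m : profile | m i = mi])
          ((\prod_(j : 'I_n | j != i) lam j (m j)) * g m z)%:E)%E.

Definition SUPP (p : Z -> R) : set Z := [set z | 0 < p z].

Variables (Theta : countType) (u : 'I_n -> Theta -> Z -> R).

Definition MNE (g : profile -> Z -> R) (th : Theta) :
  set (forall i : 'I_n, M i -> R) :=
  [set lam | is_mixed_profile lam /\
     forall (i : 'I_n) (mi : M i),
       Uexp u i th (glot_dev g lam mi) <= Uexp u i th (glot g lam)].

Definition mixed_nash_A_impl (F : Theta -> set Z) (g : profile -> Z -> R) : Prop :=
  forall th, \bigcup_(lam in MNE g th) SUPP (glot g lam) = F th.

End Mechanism.

From HB Require Import structures.
From mathcomp Require Import all_boot all_order all_algebra.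
From mathcomp Require Import all_classical all_reals.
From mathcomp Require Import ereal esum.
Import Order.TTheory GRing.Theory Num.Theory.
Local Open Scope classical_set_scope.
Local Open Scope ring_scope.

(* Fix an equilibrium [lam] at [th] and call an outcome reachable if some
   profile in which every player other than [i] sends a message from the
   support of [lam] yields it with positive probability.  Every outcome of [g]
   lies in Z^* (when Z is an i0-max set, all players are indifferent over Z at
   the corresponding state, so every pure profile is an equilibrium there), and
   a reachable outcome is no better for [i] than F(th): otherwise [i] deviates
   profitably, as the equilibrium lottery is supported in F(th), where u_i^th
   is constant and minimal on Z^*.  If the reachable outcomes lie in an
   i-Z^*-th'-max set, every profile producing them is a pure equilibrium at
   th', hence they lie in F(th').  The required K is the least fixed point of
   the monotone map K |-> Theta_i^th /\ Lambda^i(E /\ bigcap_(t in K) F(t)),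
   E = Z^* /\ L_i^Z(F(th), th): it belongs to Xi_i(th) (it contains
   Lambda^i(E), which lies in Theta_i^th), and fixed-point induction shows that
   the reachable outcomes lie in F(t) for all t in K. *)

Section esum_lemmas.
Context {R : realType} {T : choiceType}.
Implicit Types (D : set T) (a : T -> \bar R).
Local Open Scope ereal_scope.

Lemma ge0_esumZl D (r : R) a : (0 <= r)%R -> (forall t, D t -> 0 <= a t) ->
  \esum_(t in D) (r%:E * a t) = r%:E * \esum_(t in D) a t.
Proof.
move=> r0 a0; rewrite /esum -ereal_supZl //; last first.
  by apply/set0P; exists 0; exists set0; [exact: fsets_set0|rewrite fsbig_set0].
congr ereal_sup; rewrite image_comp; apply: eq_imagel => X [finX XD] /=.
rewrite !fsbig_finite//= !big_seq ge0_sume_distrr// => t.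
by rewrite in_fset_set// inE => /XD /a0.
Qed.

Lemma esum_single D t0 a : D t0 -> 0 <= a t0 ->
  (forall t, D t -> t <> t0 -> a t = 0) -> \esum_(t in D) a t = a t0.
Proof.
move=> Dt0 a0 a_out; rewrite (esumID [set t0]); last first.
  by move=> t Dt; case: (pselect (t = t0)) => [->//|/a_out ->].
rewrite (_ : D `&` [set t0] = [set t0]); last first.
  by apply/seteqP; split=> [t []//|t ->].
by rewrite esum_set1// esum1 ?adde0// => t [Dt /a_out]; apply.
Qed.

Lemma esum_fine_gt0 D a : (forall t, D t -> 0 <= a t) ->
  (0 < fine (\esum_(t in D) a t))%R -> exists2 t, D t & 0 < a t.
Proof.
move=> a0; apply: contraPP => /forall2NP a_le0.
suff -> : \esum_(t in D) a t = 0 by rewrite ltxx.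
apply: esum1 => t Dt; apply/eqP; rewrite eq_le a0 // andbT leNgt.
by case: (a_le0 t) => // /negP.
Qed.

End esum_lemmas.

Section profile_update.
Context {n : nat} {M : 'I_n -> countType}.
Implicit Types m : profile M.

Definition upd m [j : 'I_n] (x : M j) : profile M :=
  @finfun _ (fun l => M l) (@eqtype.dfwith _ (fun l => M l) (fun l => m l) j x).

Lemma upd_in m [j] (x : M j) : upd m x j = x.
Proof. by rewrite /upd ffunE dfwith_in. Qed.

Lemma upd_out m [j] (x : M j) [l] : j != l -> upd m x l = m l.
Proof. by move=> jl; rewrite /upd ffunE dfwith_out. Qed.

Lemma upd_id m j : upd m (m j) = m.
Proof.
apply/ffunP => l; have [<-|jl] := eqVneq j l; first by rewrite upd_in.
by rewrite upd_out.
Qed.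

Lemma upd_upd m j (x y : M j) : upd (upd m x) y = upd m y.
Proof.
apply/ffunP => l; have [<-|jl] := eqVneq j l; first by rewrite !upd_in.
by rewrite !upd_out.
Qed.

End profile_update.

Lemma mixed_profile_ge0 {R : realType} {n : nat} {M : 'I_n -> countType}
    {lam : forall j : 'I_n, M j -> R} :
  is_mixed_profile lam -> forall j t, 0 <= lam j t.
Proof. by move=> lamP j; case: (lamP j). Qed.

Section product_mass.
Context {R : realType} {n : nat} {M : 'I_n -> countType}.
Context {lam : forall j : 'I_n, M j -> R}.
Hypothesis lamP : is_mixed_profile lam.
Variable m0 : profile M.
Local Open Scope ereal_scope.

Let lam_ge0 := mixed_profile_ge0 lamP.

Definition agree_off (Q : pred 'I_n) : set (profile M) :=
  [set m | forall l, ~~ Q l -> m l = m0 l].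

Lemma upd_bij_agree_off [j] [s : seq 'I_n] : j \notin s ->
  set_bij ([set: M j] `*`` (fun=> agree_off (fun l => l \in s)))
          (agree_off (fun l => l \in j :: s)) (fun p => upd p.2 p.1).
Proof.
move=> js; split.
- move=> [x m] [_ /= m_m0] l; rewrite inE negb_or => /andP[lj ls].
  by rewrite upd_out ?m_m0// eq_sym.
- move=> [x1 m1] [x2 m2]; rewrite !inE => -[_ /= m1_m0] [_ /= m2_m0] /= e.
  have ex : x1 = x2 by rewrite -(upd_in m1 x1) e upd_in.
  subst x2; congr pair; apply/ffunP => l.
  have [<-|jl] := eqVneq j l; first by rewrite m1_m0 ?m2_m0.
  by rewrite -(upd_out m1 x1 jl) e upd_out.
- move=> m m_m0; exists (m j, upd m (m0 j)); last by rewrite /= upd_upd upd_id.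
  split=> // l ls; have [<-|jl] := eqVneq j l; first by rewrite upd_in.
  by rewrite upd_out// m_m0// inE negb_or ls eq_sym jl.
Qed.

Lemma esum_prod_seq (s : seq 'I_n) : uniq s ->
  \esum_(m in agree_off (fun l => l \in s))
     (\prod_(l | l \in s) lam l (m l))%:E = 1.
Proof.
elim: s => [_|j s IH /= /andP[js us]].
  rewrite (@esum_single _ _ _ m0) ?big_pred0// => m m_m0 [].
  by apply/ffunP => l; exact: m_m0.
rewrite (reindex_esum _ _ _ _ (upd_bij_agree_off js)).
rewrite -(@esum_esum _ _ _ [set: M j] (fun=> agree_off (fun l => l \in s))
   (fun x m => (\prod_(l | l \in j :: s) lam l (upd m x l))%:E)); last first.
  by move=> x m _ _; rewrite lee_fin; apply: prodr_ge0.
case: (lamP j) => _ <-; apply: eq_esum => x _.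
transitivity (\esum_(m in agree_off (fun l => l \in s))
   ((lam j x)%:E * (\prod_(l | l \in s) lam l (m l))%:E)).
  apply: eq_esum => m _; rewrite -EFinM (bigD1 j) ?mem_head//= upd_in.
  congr (_ * _)%:E; apply: eq_big => l.
    by rewrite inE; case: eqVneq => [->|] /=; rewrite ?(negPf js) ?andbT.
  by move=> /andP[_ lj]; rewrite upd_out// eq_sym.
by rewrite ge0_esumZl ?IH ?mule1// => m _; rewrite lee_fin; apply: prodr_ge0.
Qed.

Lemma esum_prod_pred (Q : pred 'I_n) :
  \esum_(m in agree_off Q) (\prod_(l | Q l) lam l (m l))%:E = 1.
Proof.
have memQ l : (l \in [seq l <- enum 'I_n | Q l]) = Q l.
  by rewrite mem_filter mem_enum andbT.
have uQ : uniq [seq l <- enum 'I_n | Q l] by rewrite filter_uniq ?enum_uniq.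
rewrite -(esum_prod_seq _ uQ) (_ : agree_off _ = agree_off Q); last first.
  by apply/seteqP; split=> m m_m0 l /= Ql; apply: m_m0; rewrite ?memQ in Ql *.
by apply: eq_esum => m _; congr EFin; apply: eq_bigl => l; rewrite memQ.
Qed.

End product_mass.

Section lottery_average.
Context {R : realType} {Z : finType} {p : Z -> R}.
Hypothesis pP : is_lottery p.

Lemma lottery_avg_le (f : Z -> R) c :
  (forall z, 0 < p z -> f z <= c) -> \sum_z p z * f z <= c.
Proof.
case: pP => p_ge0 p1 f_le; rewrite -[leRHS]mul1r -p1 mulr_suml.
apply: ler_sum => z _; have [->|pz] := eqVneq (p z) 0; first by rewrite !mul0r.
by rewrite ler_wpM2l// f_le// lt0r pz p_ge0.
Qed.

Lemma lottery_avg_ge (f : Z -> R) c :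
  (forall z, 0 < p z -> c <= f z) -> c <= \sum_z p z * f z.
Proof.
move=> c_le; rewrite -lerN2 -sumrN.
under eq_bigr => z _ do rewrite -mulrN.
by apply: lottery_avg_le => z /c_le; rewrite lerN2.
Qed.

Lemma lottery_avg_gt (f : Z -> R) c z0 : (forall z, 0 < p z -> c <= f z) ->
  0 < p z0 -> c < f z0 -> c < \sum_z p z * f z.
Proof.
case: pP => p_ge0 p1 c_le pz0 cz0.
rewrite -subr_gt0 -[c]mul1r -p1 mulr_suml -sumrB (bigD1 z0)//= -mulrBr.
rewrite ltr_pwDl ?mulr_gt0 ?subr_gt0//; apply: sumr_ge0 => z _.
have [->|pz] := eqVneq (p z) 0; first by rewrite !mul0r subrr.
by rewrite -mulrBr mulr_ge0// subr_ge0 c_le// lt0r pz p_ge0.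
Qed.

End lottery_average.

Lemma lottery_avg_sep {R : realType} {Z : finType} [p q f : Z -> R] c :
  is_lottery p -> is_lottery q ->
  (forall z, 0 < p z -> f z <= c) -> (forall z, 0 < q z -> c <= f z) ->
  \sum_z p z * f z <= \sum_z q z * f z.
Proof.
move=> pP qP f_le f_ge.
exact: le_trans (lottery_avg_le pP _ _ f_le) (lottery_avg_ge qP _ _ f_ge).
Qed.

Section mixture.
Context {R : realType} {T : choiceType} {Z : finType}.
Context {g : T -> Z -> R} {D : set T} {W : T -> R}.
Hypotheses (gP : forall t, is_lottery (g t)) (W_ge0 : forall t, 0 <= W t).
Hypothesis W1 : (\esum_(t in D) (W t)%:E = 1)%E.

Let g_ge0 t z : 0 <= g t z. Proof. by case: (gP t). Qed.

Let term_ge0 t z : (0 <= (W t * g t z)%:E)%E.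
Proof. by rewrite lee_fin mulr_ge0. Qed.

Lemma mixture_fin_num z : \esum_(t in D) (W t * g t z)%:E \is a fin_num.
Proof.
rewrite ge0_fin_numE ?esum_ge0// (@le_lt_trans _ _ 1%E) ?ltry//.
rewrite -W1; apply: le_esum => t _; rewrite lee_fin ler_piMr//.
by case: (gP t) => _ <-; rewrite (bigD1 z)//= lerDl sumr_ge0.
Qed.

Lemma mixture_lottery :
  is_lottery (fun z => fine (\esum_(t in D) (W t * g t z)%:E)).
Proof.
split=> [z|]; first by rewrite fine_ge0 ?esum_ge0.
apply: EFin_inj; rewrite EFin_sum_fine => [|z _]; last exact: mixture_fin_num.
rewrite -esum_sum // -W1; apply: eq_esum => t _.
by rewrite sumEFin -mulr_sumr; case: (gP t) => _ ->; rewrite mulr1.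
Qed.

Lemma mixture_ge_term t z : D t ->
  W t * g t z <= fine (\esum_(t in D) (W t * g t z)%:E).
Proof.
move=> Dt; rewrite -lee_fin fineK ?mixture_fin_num//.
by apply: esum_ge; exists [set t]; [split=> // t' ->|rewrite fsbig_set1].
Qed.

Lemma mixture_gt0 z : 0 < fine (\esum_(t in D) (W t * g t z)%:E) ->
  exists2 t, D t & 0 < W t /\ 0 < g t z.
Proof.
case/esum_fine_gt0 => [t _|t Dt]; first exact: term_ge0.
rewrite lte_fin => Wg_gt0; exists t => //.
by split; rewrite lt0r ?W_ge0 ?g_ge0 andbT; apply: contraTneq Wg_gt0 => ->;
  rewrite ?mul0r ?mulr0 ltxx.
Qed.

End mixture.

Lemma prodr_gt0_factor {R : numDomainType} (I : finType) (P : pred I)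
    (f : I -> R) l :
  (forall k, 0 <= f k) -> 0 < \prod_(k | P k) f k -> P l -> 0 < f l.
Proof.
move=> f_ge0; rewrite lt0r => /andP[/prodf_neq0 f_neq0 _] Pl.
by rewrite lt0r f_neq0 ?f_ge0.
Qed.

Section mechanism.
Context {R : realType} {n : nat} {M : 'I_n -> countType} {Z : finType}.
Context {g : profile M -> Z -> R}.
Hypothesis gP : is_mechanism g.

Let g_ge0 m z : 0 <= g m z. Proof. by case: (gP m). Qed.

Section mixed_profile.
Context {lam : forall j : 'I_n, M j -> R}.
Hypothesis lamP : is_mixed_profile lam.
Let lam_ge0 := mixed_profile_ge0 lamP.

Let prod_lam_ge0 (P : pred 'I_n) (m : profile M) :
  0 <= \prod_(l | P l) lam l (m l).
Proof. exact: prodr_ge0. Qed.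

Lemma mixed_profile_witness : exists m : profile M, forall j, 0 < lam j (m j).
Proof.
have lam_pos j : exists t, 0 < lam j t.
  have lam1 : 0 < fine (\esum_(t in [set: M j]) (lam j t)%:E).
    by case: (lamP j) => _ ->; exact: ltr01.
  by case/esum_fine_gt0: lam1 => [t _|t _];
    rewrite ?lee_fin ?lte_fin; [|exists t].
exists [ffun j => xchoose (lam_pos j)] => j.
by rewrite ffunE (xchooseP (lam_pos j)).
Qed.

Lemma esum_prod_all :
  (\esum_(m in [set: profile M]) (\prod_l lam l (m l))%:E = 1)%E.
Proof.
have [m0 _] := mixed_profile_witness.
by rewrite -(esum_prod_pred lamP m0 predT); congr esum; apply/seteqP; split.
Qed.

Lemma esum_prod_others [i] (mi : M i) :
  (\esum_(m in [set m : profile M | m i = mi])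
     (\prod_(l | l != i) lam l (m l))%:E = 1)%E.
Proof.
have [m0 _] := mixed_profile_witness.
rewrite -(esum_prod_pred lamP (upd m0 mi) (fun l => l != i)); congr esum.
apply/seteqP; split=> m /=; first by move=> <- l /negPn/eqP ->; rewrite upd_in.
by move=> /(_ i); rewrite eqxx upd_in => ->.
Qed.

Lemma glot_lottery : is_lottery (glot g lam).
Proof.
exact (mixture_lottery gP (prod_lam_ge0 predT) esum_prod_all).
Qed.

Lemma glot_dev_lottery [i] (mi : M i) : is_lottery (glot_dev g lam mi).
Proof.
exact (mixture_lottery gP (prod_lam_ge0 _) (esum_prod_others mi)).
Qed.

Lemma glot_dev_ge (m : profile M) i z :
  \prod_(l | l != i) lam l (m l) * g m z <= glot_dev g lam (m i) z.
Proof.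
exact (mixture_ge_term gP (prod_lam_ge0 _) (esum_prod_others (m i)) _ _
  (erefl (m i))).
Qed.

Lemma glot_gt0 z : 0 < glot g lam z ->
  exists2 m : profile M, forall l, 0 < lam l (m l) & 0 < g m z.
Proof.
case/(mixture_gt0 gP (prod_lam_ge0 predT)) => m _ [lam_m gmz].
by exists m => // l; apply: prodr_gt0_factor lam_m _.
Qed.

Lemma glot_dev_gt0 [i] (mi : M i) z : 0 < glot_dev g lam mi z ->
  exists2 m : profile M, m i = mi &
    (forall l, l != i -> 0 < lam l (m l)) /\ 0 < g m z.
Proof.
case/(mixture_gt0 gP (prod_lam_ge0 _)) => m mi_m [lam_m gmz].
by exists m => //; split=> // l; apply: prodr_gt0_factor lam_m.
Qed.

End mixed_profile.

Definition pure (m : profile M) (j : 'I_n) (t : M j) : R := (t == m j)%:R.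

Lemma pure_mixed m : is_mixed_profile (pure m).
Proof.
move=> j; split=> [t|]; first exact: ler0n.
rewrite (@esum_single _ _ _ (m j)) ?lee_fin ?ler0n /pure ?eqxx//.
by move=> t _ /eqP/negPf ->.
Qed.

Lemma glot_pure m : glot g (pure m) = g m.
Proof.
have prod1 : \prod_l pure m l (m l) = 1.
  by rewrite big1 // => l _; rewrite /pure eqxx.
apply/funext => z.
rewrite /glot (@esum_single _ _ _ m) ?prod1 ?mul1r ?lee_fin //.
move=> m' _ m'_m; have [l /eqP/negPf m'l] : exists l, m' l <> m l.
  by apply/existsNP => eq_m; apply/m'_m/ffunP.
by rewrite (bigD1 l)//= /pure m'l !mul0r.
Qed.

Lemma glot_dev_pure m j (x : M j) : glot_dev g (pure m) x = g (upd m x).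
Proof.
have prod1 : \prod_(l | l != j) pure m l (upd m x l) = 1.
  by rewrite big1 // => l lj; rewrite /pure upd_out ?eqxx // eq_sym.
apply/funext => z; rewrite /glot_dev (@esum_single _ _ _ (upd m x)) /=;
  rewrite ?upd_in ?prod1 ?mul1r ?lee_fin //.
move=> m' m'j m'_m.
have [l lj /negPf m'l] : exists2 l, l != j & m' l != m l.
  apply: contrapT => /forall2NP eq_m; apply/m'_m/ffunP => l.
  have [<-|jl] := eqVneq j l; first by rewrite upd_in.
  rewrite upd_out //; apply/eqP.
  by case: (eq_m l) => /negP; rewrite negbK // eq_sym (negPf jl).
by rewrite (bigD1 l)//= /pure m'l !mul0r.
Qed.

Lemma pure_MNE (Theta : countType) (u : 'I_n -> Theta -> Z -> R) th m :
  (forall j (x : M j), Uexp u j th (g (upd m x)) <= Uexp u j th (g m)) ->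
  MNE u g th (pure m).
Proof.
by move=> m_NE; split=> [|j x]; rewrite ?glot_pure ?glot_dev_pure //;
  exact: pure_mixed.
Qed.

End mechanism.

Section least_fixpoint.
Context {T : Type} (Phi : set T -> set T).
Hypothesis Phi_mono : forall A B, A `<=` B -> Phi A `<=` Phi B.

Definition lfp : set T := \bigcap_(A in [set A | Phi A `<=` A]) A.

Lemma lfp_prefix : Phi lfp `<=` lfp.
Proof.
move=> t Phi_t A PhiA; apply: (PhiA); apply: Phi_mono Phi_t.
by move=> s /(_ A PhiA).
Qed.

Lemma lfp_fix : Phi lfp = lfp.
Proof.
apply/seteqP; split; first exact: lfp_prefix.
by move=> t lfp_t; apply: lfp_t; apply: Phi_mono; exact: lfp_prefix.
Qed.

Lemma lfp_ind A : Phi (lfp `&` A) `<=` A -> lfp `<=` A.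
Proof.
move=> PhiA t lfp_t; suff [] : (lfp `&` A) t by [].
apply: lfp_t => s Phi_s; split; last exact: PhiA.
by apply: lfp_prefix; apply: Phi_mono Phi_s => ? [].
Qed.

End least_fixpoint.

Lemma Lambda_sub {R : realType} {n : nat} {Theta : countType} {Z : finType}
    [u : 'I_n -> Theta -> Z -> R] [F : Theta -> set Z] [i] [B B' : set Z] :
  B' `<=` B -> B' !=set0 -> Lambda u F i B `<=` Lambda u F i B'.
Proof.
move=> B'B B'_ne th [_ [BZ [B_i B_j]]]; split=> //; split=> [z /B'B/BZ //|].
split=> [z B'z|j ji z /B'B]; last exact: B_j.
by split=> // z' /B'B B'z'; case: (B_i z (B'B _ B'z)) => _; apply.
Qed.

Definition reach {R : realType} {n : nat} {Z : finType} {M : 'I_n -> countType}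
    (g : profile M -> Z -> R) (i : 'I_n) (lam : forall j : 'I_n, M j -> R) :
  set Z :=
  [set z | exists2 m : profile M,
     forall l, l != i -> 0 < lam l (m l) & 0 < g m z].

(* Intersecting [K] with Theta_i keeps [F th] inside the argument of Lambda, so
   that argument never becomes empty and the step is monotone; on subsets of
   Theta_i its nonempty fixed points are exactly the elements of Xi_i(th). *)
Definition Xi_step {R : realType} {n : nat} {Theta : countType} {Z : finType}
    (u : 'I_n -> Theta -> Z -> R) (F : Theta -> set Z) (i : 'I_n) (th : Theta)
    (K : set Theta) : set Theta :=
  Theta_i u F i th `&`
  Lambda u F i (Zstar u F `&` LZset u i th (F th)
                `&` \bigcap_(t in K `&` Theta_i u F i th) F t).

Section implementation.
Context {R : realType} {n : nat} {Theta : countType} {Z : finType}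
  {M : 'I_n -> countType}.
Context {u : 'I_n -> Theta -> Z -> R} {F : Theta -> set Z}
  {g : profile M -> Z -> R}.
Hypotheses (gP : is_mechanism g) (F_impl : mixed_nash_A_impl u F g).
Local Notation Zs := (Zstar u F).

Lemma pure_NE_supp th (m : profile M) :
  (forall j (x : M j), Uexp u j th (g (upd m x)) <= Uexp u j th (g m)) ->
  SUPP (g m) `<=` F th.
Proof.
move=> m_NE z gmz; rewrite -(F_impl th).
by exists (pure m); [exact: pure_MNE | rewrite /SUPP /= glot_pure].
Qed.

Lemma mechanism_Zstar (m : profile M) z : 0 < g m z -> Zs z.
Proof.
move=> gmz; rewrite /Zstar; case: asboolP => // -[i0 [_ [th0 [Z_i0 Z_j]]]].
exists th0; apply: (pure_NE_supp th0 m) gmz => j x.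
have u_const z1 z2 : u j th0 z1 <= u j th0 z2.
  have [->|ji0] := eqVneq j i0; first by case: (Z_i0 z2 I) => _; apply.
  by case: (Z_j j ji0 z2 I) => _; apply.
by apply: (lottery_avg_sep (u j th0 z) (gP _) (gP _)) => z' _; exact: u_const.
Qed.

Section deviations.
Context {i : 'I_n} {th : Theta}.
Hypothesis Fth_min : F th `<=` argmin_in (u i th) Zs.
Hypothesis Fth_ne : F th !=set0.
Local Notation E := (Zs `&` LZset u i th (F th)).

Lemma u_const_F [z w] : F th z -> F th w -> u i th z = u i th w.
Proof.
move=> /Fth_min [Zz z_min] /Fth_min [Zw w_min].
by apply/eqP; rewrite eq_le z_min ?w_min.
Qed.

Lemma F_sub_E : F th `<=` E.
Proof.
move=> z Fz; split=> [|w Fw]; first by case: (Fth_min _ Fz).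
by rewrite (u_const_F Fz Fw).
Qed.

Lemma reach_LZset [lam] :
  MNE u g th lam -> reach g i lam `<=` LZset u i th (F th).
Proof.
move=> [lamP lam_NE] z [m lam_m gmz] w Fw; rewrite leNgt; apply/negP => wz.
have eq_payoff : Uexp u i th (glot g lam) <= u i th w.
  apply: lottery_avg_le (glot_lottery gP lamP) _ _ _ => z' /= glot_z'.
  by rewrite (@u_const_F z' w) // -(F_impl th); exists lam.
have dev_payoff : u i th w < Uexp u i th (glot_dev g lam (m i)).
  apply: (lottery_avg_gt (glot_dev_lottery gP lamP (m i)) _ _ z _ _ wz).
    move=> z' /(glot_dev_gt0 gP lamP) [m' _ [_ /mechanism_Zstar Zz']].
    by case: (Fth_min _ Fw) => _; apply.
  apply: lt_le_trans (glot_dev_ge gP lamP m i z).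
  by rewrite mulr_gt0 // prodr_gt0.
by move: (lam_NE i (m i)); rewrite leNgt (le_lt_trans eq_payoff dev_payoff).
Qed.

Lemma reach_sub_E [lam] : MNE u g th lam -> reach g i lam `<=` E.
Proof.
move=> lam_NE z z_reach; split; last exact: reach_LZset lam_NE z z_reach.
by case: z_reach => m _ /mechanism_Zstar.
Qed.

Lemma reach_sub_F [lam B th'] : reach g i lam `<=` B -> Lambda u F i B th' ->
  reach g i lam `<=` F th'.
Proof.
move=> reach_B [[b0 Bb0] [BZ [B_i B_j]]] z [m lam_m gmz].
apply: (pure_NE_supp th' m) gmz => j x.
have reach_m z' : 0 < g m z' -> B z' by move=> gmz'; apply: reach_B; exists m.
have [ji|ji] := eqVneq j i; first subst j.
  have reach_dev z' : 0 < g (upd m x) z' -> B z'.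
    move=> gz'; apply: reach_B; exists (upd m x) => // l li.
    by rewrite upd_out ?lam_m // eq_sym.
  apply: (lottery_avg_sep (u i th' b0) (gP _) (gP _)) => z' gz'.
    by case: (B_i _ Bb0) => _; apply; exact: reach_dev.
  by case: (B_i _ (reach_m _ gz')) => _; apply.
apply: (lottery_avg_sep (u j th' b0) (gP _) (gP _)) => z' gz'.
  by case: (B_j j ji _ Bb0) => _; apply; exact: mechanism_Zstar gz'.
by case: (B_j j ji _ (reach_m _ gz')) => _; apply; exact: BZ.
Qed.

Lemma Lambda_E_sub_Theta_i : Lambda u F i E `<=` Theta_i u F i th.
Proof.
move=> th' E_th'; split; first exact: Lambda_sub F_sub_E Fth_ne _ E_th'.
move=> z; rewrite -(F_impl th) => -[lam lam_NE glot_z].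
have [m lam_m gmz] := glot_gt0 gP (proj1 lam_NE) _ glot_z.
by apply: (reach_sub_F (reach_sub_E lam_NE) E_th'); exists m.
Qed.

Lemma Xi_step_arg_neq0 K :
  (E `&` \bigcap_(t in K `&` Theta_i u F i th) F t) !=set0.
Proof.
have [z Fz] := Fth_ne; exists z; split; first exact: F_sub_E.
by move=> t [_ [_ Fth_sub]]; exact: Fth_sub.
Qed.

Lemma Xi_step_mono K K' :
  K `<=` K' -> Xi_step u F i th K `<=` Xi_step u F i th K'.
Proof.
move=> KK' t [Theta_t Lambda_t]; split=> //.
apply: Lambda_sub _ (Xi_step_arg_neq0 K') _ Lambda_t.
by move=> z [Ez F_z]; split=> // t' [/KK' K't' Theta_t']; exact: F_z.
Qed.

Local Notation K0 := (lfp (Xi_step u F i th)).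

Lemma K0_sub_Theta_i : K0 `<=` Theta_i u F i th.
Proof. by rewrite -lfp_fix; [move=> t [] | exact: Xi_step_mono]. Qed.

Lemma K0_Xi : Lambda u F i E !=set0 -> Xi u F i th K0.
Proof.
move=> [t0 E_t0].
have K0_fix : Xi_step u F i th K0 = K0 by exact/lfp_fix/Xi_step_mono.
have K0I : K0 `&` Theta_i u F i th = K0 by apply/setIidl; exact: K0_sub_Theta_i.
split; first exact: K0_sub_Theta_i.
split; last by rewrite -[in RHS]K0_fix /Xi_step K0I.
exists t0; rewrite -K0_fix; split; first exact: Lambda_E_sub_Theta_i.
by apply: Lambda_sub _ (Xi_step_arg_neq0 K0) _ E_t0 => z [].
Qed.

Lemma reach_sub_K0 [lam] :
  MNE u g th lam -> reach g i lam `<=` \bigcap_(t in K0) F t.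
Proof.
move=> lam_NE; suff K0_F : K0 `<=` [set t | reach g i lam `<=` F t].
  by move=> z z_reach t /K0_F; apply.
apply: (lfp_ind _ Xi_step_mono) => t' [_ Lambda_t'].
apply: (reach_sub_F _ Lambda_t') => z' z'_reach.
split; first exact: reach_sub_E lam_NE _ z'_reach.
by move=> t'' [[_ reach_F] _]; exact: reach_F.
Qed.

End deviations.

End implementation.

Theorem lemma7 (R : realType) (n : nat) (Theta : countType) (Z : finType)
  (u : 'I_n -> Theta -> Z -> R) (F : Theta -> set Z)
  (M : 'I_n -> countType) (g : profile M -> Z -> R) :
  (3 <= n)%N ->
  (forall th, F th !=set0) ->
  is_mechanism g ->
  mixed_nash_A_impl u F g ->
  forall (i : 'I_n) (th : Theta) (lam : forall j : 'I_n, M j -> R),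
    MNE u g th lam ->
    F th `<=` argmin_in (u i th) (Zstar u F) ->
    Xi u F i th !=set0 ->
    iZstar_max u F i (Zstar u F `&` LZset u i th (F th)) ->
    \bigcup_(mi in [set: M i]) SUPP (glot_dev g lam mi)
      `<=` Zstar u F `&` LZset u i th (F th)
           `&` \bigcup_(K in Xi u F i th) \bigcap_(th' in K) F th'.
Proof.
move=> _ F_ne gP F_impl i th lam lam_NE Fth_min _ E_max z [mi _ glot_dev_z].
have [m _ [lam_m gmz]] := glot_dev_gt0 gP (proj1 lam_NE) _ _ glot_dev_z.
have z_reach : reach g i lam z by exists m.
split; first exact: (reach_sub_E gP F_impl Fth_min lam_NE _ z_reach).
exists (lfp (Xi_step u F i th)).
  exact: (K0_Xi gP F_impl Fth_min (F_ne th) E_max).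
exact: (reach_sub_K0 gP F_impl Fth_min (F_ne th) lam_NE _ z_reach).
Qed.
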